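(* Let $G=A*B$ be a free product of groups $A$ and $B$. Then $A$ is multi-malnormal in $G$.
   Context: Notation $x^y=y^{-1}xy$. A normal subsemigroup of a group is a (possibly empty) subset closed under multiplication and conjugation. A subgroup $C$ of a group $H$ is multi-malnormal in $H$ if for every normal subsemigroup $C'$ of $C$ with $1\notin C'$, every $n\ge1$, all $c_1,\dots,c_n\in C'$ and all $h_1,\dots,h_n\in H\setminus C$, one has $c_1^{h_1}\cdots c_n^{h_n}\in H\setminus C$. *)

From HB Require Import structures.
From mathcomp Require Import all_boot.
Set Implicit Arguments. Unset Strict Implicit. Unset Printing Implicit Defensive.
Local Open Scope group_scope.

Section Defs.
Variable G : groupType.

Definition prodg (s : seq G) : G := foldr (fun x y => x * y) 1 s.

Definition is_subgroup (A : G -> Prop) : Prop :=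
  [/\ A 1, (forall x y, A x -> A y -> A (x * y)) & (forall x, A x -> A x^-1)].

Definition generates2 (A B : G -> Prop) : Prop :=
  forall P : G -> Prop, is_subgroup P ->
    (forall a, A a -> P a) -> (forall b, B b -> P b) -> forall g, P g.

(* A letter (true, a) stands for a in A \ {1}, (false, b) for b in B \ {1}. *)
Definition letter_ok (A B : G -> Prop) (l : bool * G) : Prop :=
  (if l.1 then A l.2 else B l.2) /\ l.2 <> 1.

Fixpoint alternating (s : seq (bool * G)) : Prop :=
  match s with
  | l1 :: ((l2 :: _) as s') => l1.1 <> l2.1 /\ alternating s'
  | _ => True
  end.

(* G is the (internal) free product A * B: A, B subgroups generating G, and
   no nonempty reduced alternating word in nontrivial elements of A and B
   represents 1 (normal form theorem). *)
Definition is_free_product (A B : G -> Prop) : Prop :=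
  [/\ is_subgroup A, is_subgroup B, generates2 A B &
      forall s : seq (bool * G), s <> [::] ->
        (forall l, l \in s -> letter_ok A B l) ->
        alternating s -> prodg (map snd s) <> 1].

Definition normal_subsemigroup (C C' : G -> Prop) : Prop :=
  [/\ (forall x, C' x -> C x),
      (forall x y, C' x -> C' y -> C' (x * y)) &
      (forall x c, C' x -> C c -> C' (x ^ c))].

(* C is multi-malnormal in G (here H = the whole group G). *)
Definition multi_malnormal (C : G -> Prop) : Prop :=
  forall C' : G -> Prop, normal_subsemigroup C C' -> ~ C' 1 ->
    forall s : seq (G * G), s <> [::] ->
      (forall p, p \in s -> C' p.1 /\ ~ C p.2) ->
      ~ C (prodg (map (fun p => p.1 ^ p.2) s)).

End Defs.

From HB Require Import structures.
From mathcomp Require Import all_boot.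
From Stdlib Require Import Classical_Prop.
From mathcomp Require Import zify.

(* Write each conjugator [h] outside [A] as [a w], with [a] in [A] and [w] a reduced
   word beginning with a [B]-letter; as [C'] is normal in [A], [c ^ h = (c ^ a) ^ w] with
   [c ^ a] in [C'].  The product becomes a list of pairs [(d_i, w_i)], and we show by
   lexicographic induction on (number of pairs, total length of the [w_i], a weighted
   length) that its value [P] is not in [A].  Scanning the list from the right, either a
   reduction applies -- two pairs with equal words merge into [(d_1 d_2, w_1)], or, when
   the letter of [A] separating [w_1] from [w_2] cancels, two factors commute with one
   conjugator shortened (possibly into [A], and then a factor is pulled out to the right)
   -- or the word [w_1^-1] survives on the left: [P = w_1^-1 (d_1 b) V] with [d_1 b] in
   [A \ 1] and [V] starting with a [B]-letter.  The normal form theorem then puts [P]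
   outside [A]; [1 \notin C'] is what keeps the middle letter [d_1 b] nontrivial. *)

Set Implicit Arguments. Unset Strict Implicit. Unset Printing Implicit Defensive.
Local Open Scope group_scope.

Section Words.
Variables (G : groupType) (A B : G -> Prop).
Hypotheses (subA : is_subgroup A) (subB : is_subgroup B).

Local Notation word := (seq (bool * G)).

Definition factor (t : bool) (x : G) : Prop := if t then A x else B x.

Lemma factorM t x y : factor t x -> factor t y -> factor t (x * y).
Proof. by case: t; [case: subA | case: subB] => _ mul _; apply: mul. Qed.

Lemma factorV t x : factor t x -> factor t x^-1.
Proof. by case: t; [case: subA | case: subB] => _ _ inv; apply: inv. Qed.

Definition alternates (s : word) := sorted (fun x y => x.1 != y.1) s.

(* The empty word counts as both starting and ending in [A]. *)
Definition head_side (s : word) := (head (true, 1) s).1.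
Definition last_side (s : word) := (last (true, 1) s).1.

Definition reduced (s : word) :=
  {in s, forall l, letter_ok A B l} /\ alternates s.

Definition wprod (s : word) := prodg (map snd s).

Definition word_inv (s : word) := rev [seq (l.1, l.2^-1) | l <- s].

Definition joinable (s t : word) :=
  [|| s == [::], t == [::] | last_side s != head_side t].

Lemma alternatingE s : alternating s <-> alternates s.
Proof.
elim: s => [|x [|y s] IH] //=; rewrite /alternates /= in IH *.
by rewrite IH; split=> [[/eqP-> ->]|/andP[/eqP]].
Qed.

Lemma alternates_cat s t :
  alternates (s ++ t) = [&& alternates s, alternates t & joinable s t].
Proof.
case: s => [|x s]; first by rewrite andbT.
case: t => [|y t]; first by rewrite cats0 /joinable /= andbT.
by rewrite /alternates /joinable /= cat_path; congr (_ && _); rewrite andbC.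
Qed.

Lemma reduced_cat s t :
  reduced (s ++ t) <-> [/\ reduced s, reduced t & joinable s t].
Proof.
rewrite /reduced alternates_cat; split.
  by case=> ok /and3P[? ? ?]; split=> //; split=> // l ls; apply: ok;
     rewrite mem_cat ls ?orbT.
by case=> [[oks ? ] [okt ?] ?]; split=> [l|]; [rewrite mem_cat => /orP[]; auto|
   apply/and3P].
Qed.

Lemma reduced_cons x s :
  reduced (x :: s) <-> [/\ letter_ok A B x, reduced s & joinable [:: x] s].
Proof.
rewrite -cat1s reduced_cat /reduced /alternates /=.
split=> [[[ok _] ? ?]|[? ? ?]]; split=> //; last by split=> // l /[!inE]/eqP->.
by apply: ok; rewrite inE.
Qed.

Lemma wprod_cons x s : wprod (x :: s) = x.2 * wprod s.
Proof. by []. Qed.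

Lemma wprod_cat s t : wprod (s ++ t) = wprod s * wprod t.
Proof.
elim: s => [|x s IH]; first exact/esym/mul1g.
by rewrite cat_cons !wprod_cons IH mulgA.
Qed.

Lemma wprod_rcons s x : wprod (rcons s x) = wprod s * x.2.
Proof. by rewrite -cats1 wprod_cat /wprod /= mulg1. Qed.

Lemma word_inv_cons x s : word_inv (x :: s) = rcons (word_inv s) (x.1, x.2^-1).
Proof. by rewrite /word_inv /= rev_cons. Qed.

Lemma word_inv_rcons s x : word_inv (rcons s x) = (x.1, x.2^-1) :: word_inv s.
Proof. by rewrite /word_inv map_rcons rev_rcons. Qed.

Lemma size_word_inv s : size (word_inv s) = size s.
Proof. by rewrite size_rev size_map. Qed.

Lemma word_inv_eq0 s : (word_inv s == [::]) = (s == [::]).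
Proof. by rewrite -!size_eq0 size_word_inv. Qed.

Lemma wprod_inv s : wprod (word_inv s) = (wprod s)^-1.
Proof.
elim: s => [|x s IH]; first by rewrite invg1.
by rewrite word_inv_cons wprod_rcons IH invgM.
Qed.

Lemma head_side_inv s : head_side (word_inv s) = last_side s.
Proof. by case/lastP: s => [|s x] //; rewrite word_inv_rcons /last_side last_rcons. Qed.

Lemma last_side_inv s : last_side (word_inv s) = head_side s.
Proof. by case: s => [|x s] //; rewrite word_inv_cons /last_side last_rcons. Qed.

Lemma reduced_inv s : reduced s -> reduced (word_inv s).
Proof.
case=> ok alt; split.
  move=> l; rewrite mem_rev => /mapP[[t x] /ok[xt x1] ->]; split=> /=.
    exact: factorV.
  by move/(congr1 (fun y => y^-1)); rewrite invgK invg1.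
rewrite /alternates rev_sorted sorted_map; apply: sub_sorted alt => x y.
by rewrite /relpre /= eq_sym.
Qed.

Lemma reduced_nil : reduced [::].
Proof. by []. Qed.

Lemma reduced_letter t x : factor t x -> x != 1 -> reduced [:: (t, x)].
Proof. by move=> tx /eqP x1; split=> [l /[!inE]/eqP->|]. Qed.

Lemma reduced_rcons s x :
  reduced (rcons s x) <-> [/\ reduced s, letter_ok A B x & joinable s [:: x]].
Proof.
rewrite -cats1 reduced_cat.
split=> [[? /reduced_cons[? _ _] ?]|[? ? ?]]; split=> //.
by apply/reduced_cons; split=> //; split.
Qed.

Lemma reduced_mull t x s : factor t x -> reduced s ->
  exists u, [/\ reduced u, wprod u = x * wprod s & size u <= (size s).+1].
Proof.
move=> tx rs; have [->|x1] := eqVneq x 1; first by exists s; rewrite mul1g.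
case: s rs => [|y s] rs.
  by exists [:: (t, x)]; split; first exact: reduced_letter.
have /reduced_cons[[ty y1] rs' jys] := rs.
have [yt|yt] := eqVneq y.1 t; last first.
  exists ((t, x) :: y :: s); split=> //; apply/reduced_cons; split=> //.
    by split=> //; apply/eqP.
  by rewrite /joinable /last_side /head_side /= eq_sym.
have tyx : factor t (x * y.2) by rewrite -yt in tx *; apply: factorM.
have [xy1|xy1] := eqVneq (x * y.2) 1.
  by exists s; split=> //; [rewrite wprod_cons mulgA xy1 mul1g | rewrite ltnW].
exists ((t, x * y.2) :: s); split; rewrite ?wprod_cons ?mulgA //.
by apply/reduced_cons; split=> //; [split=> //; apply/eqP | rewrite -yt; exact: jys].
Qed.

Lemma reduced_mul s t : reduced s -> reduced t ->
  exists u, [/\ reduced u, wprod u = wprod s * wprod t & size u <= size s + size t].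
Proof.
elim: s => [|x s IH] rs rt; first by exists t; rewrite mul1g.
have /reduced_cons[[tx _] rs' _] := rs.
have [u0 [ru0 e0 le0]] := IH rs' rt.
have [u [ru e le]] := reduced_mull tx ru0.
exists u; split=> //; first by rewrite e e0 wprod_cons mulgA.
by rewrite /= addSn (leq_trans le).
Qed.

Lemma reduced_join u c v : reduced u -> reduced v -> A c -> c != 1 ->
  last_side u = false -> head_side v = false -> reduced (u ++ (true, c) :: v).
Proof.
move=> ru rv Ac c1 lu hv; apply/reduced_cat; split=> //.
  by apply/reduced_cons; split=> //; [split=> //; apply/eqP | rewrite /joinable hv orbT].
by rewrite /joinable lu !orbT.
Qed.

Lemma head_side_cat s t : s != [::] -> head_side (s ++ t) = head_side s.
Proof. by case: s. Qed.

Lemma last_side_cat s t : t != [::] -> last_side (s ++ t) = last_side t.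
Proof. by case/lastP: t => // t x _; rewrite -rcons_cat /last_side !last_rcons. Qed.

Lemma last_side_rcons s x : last_side (rcons s x) = x.1.
Proof. by rewrite /last_side last_rcons. Qed.

Lemma reduced_div_rcons s x t y : reduced (rcons s x) -> reduced (rcons t y) -> x != y ->
  exists u, [/\ reduced u, wprod u = wprod (rcons s x) * (wprod (rcons t y))^-1,
                head_side u = head_side (rcons s x) & last_side u = head_side (rcons t y)].
Proof.
move=> rsx rty xy; have /reduced_rcons[rs [sx _] js] := rsx.
have /reduced_rcons[rt [ty _] jt] := rty.
have [exy|nxy] := eqVneq x.1 y.1; last first.
  exists (rcons s x ++ word_inv (rcons t y)); split.
  - apply/reduced_cat; split=> //; first exact: reduced_inv.
    by rewrite /joinable head_side_inv !last_side_rcons nxy !orbT.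
  - by rewrite wprod_cat wprod_inv.
  - by rewrite head_side_cat // -size_eq0 size_rcons.
  - by rewrite last_side_cat ?word_inv_eq0 -?size_eq0 ?size_rcons // last_side_inv.
set z := x.2 * y.2^-1.
have z1 : z != 1.
  apply: contra_neq xy => /divg1_eq e2.
  by rewrite [x]surjective_pairing [y]surjective_pairing exy e2.
have xz : factor x.1 z by apply: factorM; rewrite // exy; apply: factorV.
exists (s ++ (x.1, z) :: word_inv t); split.
- apply/reduced_cat; split=> //.
    apply/reduced_cons; split; [by split=> //; apply/eqP | exact: reduced_inv |].
    move: jt; rewrite /joinable /= head_side_inv word_inv_eq0 exy.
    by rewrite /last_side /head_side /= [y.1 == _]eq_sym.
- by rewrite wprod_cat wprod_cons wprod_inv !wprod_rcons invgM !mulgA.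
- by case: (s).
- rewrite last_side_cat //; case: t {rt jt rty} => [|l t]; first exact: exy.
  by rewrite -cat1s last_side_cat ?word_inv_eq0 // last_side_inv.
Qed.

Lemma reduced_compare s t : reduced s -> reduced t ->
  [\/ exists p, s = p ++ t, exists p, t = p ++ s |
      exists u, [/\ reduced u, wprod u = wprod s * (wprod t)^-1,
                    head_side u = head_side s & last_side u = head_side t]].
Proof.
elim/last_ind: s t => [|s x IH] t rs rt; first by apply: Or32; exists t; rewrite cats0.
case/lastP: t rt => [|t y] rt; first by apply: Or31; exists (rcons s x); rewrite cats0.
have [exy|xy] := eqVneq x y; last by apply: Or33; apply: reduced_div_rcons.
rewrite -{y}exy in rt *.
have [->|s0] := eqVneq s [::]; first by apply: Or32; exists t; rewrite cats1.
have [->|t0] := eqVneq t [::]; first by apply: Or31; exists s; rewrite cats1.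
have /reduced_rcons[rs' _ _] := rs; have /reduced_rcons[rt' _ _] := rt.
case: (IH t rs' rt') => [[p ->]|[p ->]|[u [ru eu hu lu]]].
- by apply: Or31; exists p; rewrite rcons_cat.
- by apply: Or32; exists p; rewrite rcons_cat.
- apply: Or33; exists u; rewrite -!cats1 !head_side_cat //.
  by rewrite !wprod_cat invgM mulgA mulgK.
Qed.

Definition starts_with_B (w : word) := reduced w /\ head_side w = false.

Definition B_bounded (w : word) :=
  [/\ reduced w, head_side w = false & last_side w = false].

Lemma split_last_A p w : reduced (p ++ w) -> p != [::] ->
  head_side (p ++ w) = false -> head_side w = false ->
  exists q a, [/\ p = rcons q (true, a), A a, a != 1 & B_bounded q].
Proof.
case/lastP: p => [//|q [t a]] /reduced_cat[/reduced_rcons[rq [/= ta a1] jq] _ jw] _ hp hw.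
have t1 : t = true.
  move: jw; rewrite /joinable hw last_side_rcons /= -size_eq0 size_rcons /=.
  by case: (w) hw => [|? ?] //= _; case: (t).
subst t.
have q0 : q != [::] by move: hp; case: (q).
exists q, a; split=> //; first exact/eqP.
split=> //; first by move: hp; rewrite -cats1 -catA !head_side_cat.
by move: jq; rewrite /joinable (negPf q0) /=; case: (last_side q).
Qed.

Lemma compare_B_words w1 w2 : starts_with_B w1 -> starts_with_B w2 ->
  [\/ w1 = w2,
      exists p a, [/\ w1 = p ++ (true, a) :: w2, A a, a != 1 & B_bounded p],
      exists p a, [/\ w2 = p ++ (true, a) :: w1, A a, a != 1 & B_bounded p] |
      exists2 u, B_bounded u & wprod u = wprod w1 * (wprod w2)^-1].
Proof.
move=> [r1 h1] [r2 h2]; have [[p e]|[p e]|[u [ru eu hu lu]]] := reduced_compare r1 r2.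
- have [p0|p0] := eqVneq p [::]; first by apply: Or41; rewrite e p0.
  rewrite e in r1 h1; have [q [a [ep Aa a1 bq]]] := split_last_A r1 p0 h1 h2.
  by apply: Or42; exists q, a; rewrite e ep cat_rcons.
- have [p0|p0] := eqVneq p [::]; first by apply: Or41; rewrite e p0.
  rewrite e in r2 h2; have [q [a [ep Aa a1 bq]]] := split_last_A r2 p0 h2 h1.
  by apply: Or43; exists q, a; rewrite e ep cat_rcons.
- by apply: Or44; exists u; first split; rewrite ?hu ?lu.
Qed.

Lemma B_bounded_inv p : B_bounded p -> B_bounded (word_inv p).
Proof.
by case=> rp hp lp; split; rewrite ?head_side_inv ?last_side_inv //; apply: reduced_inv.
Qed.

Lemma B_bounded_join p c v : B_bounded p -> A c -> c != 1 -> starts_with_B v ->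
  starts_with_B (p ++ (true, c) :: v).
Proof.
case=> rp hp lp Ac c1 [rv hv]; split; first exact: reduced_join.
by rewrite head_side_cat //; case: (p) hp.
Qed.

Lemma split_head_A u : reduced u -> ~ A (wprod u) ->
  exists a w, [/\ A a, starts_with_B w, wprod u = a * wprod w & size w <= size u].
Proof.
case: u => [|[[] x] w] ru Au; first by case: subA Au.
- have /reduced_cons[[Ax _] rw jw] := ru.
  exists x, w; split=> //; split=> //.
  case: w {ru} Au rw jw => [|l w] Au _ /=; first by rewrite /wprod /= mulg1 in Au.
  by rewrite /joinable /head_side /=; case: (l.1).
- by exists 1, ((false, x) :: w); rewrite mul1g; split=> //; case: subA.
Qed.

End Words.

Section FreeProduct.
Variables (G : groupType) (A B : G -> Prop).
Hypothesis freeAB : is_free_product A B.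

Let subA : is_subgroup A. Proof. by case: freeAB. Qed.
Let subB : is_subgroup B. Proof. by case: freeAB. Qed.

Local Notation reduced := (reduced A B).
Local Notation factor := (factor A B).

Lemma reduced_repr g : exists2 u, reduced u & wprod u = g.
Proof.
have [_ _ genAB _] := freeAB.
have letter t x : factor t x -> exists2 u, reduced u & wprod u = x.
  move=> tx; have [u [ru e _]] := reduced_mull subA subB tx (reduced_nil A B).
  by exists u; rewrite // e mulg1.
apply: (genAB (fun g => exists2 u, reduced u & wprod u = g));
  [split | exact: (letter true) | exact: (letter false)].
- by exists [::].
- move=> _ _ [s rs <-] [t rt <-].
  by have [u [? ? _]] := reduced_mul subA subB rs rt; exists u.
- by move=> _ [s rs <-]; exists (word_inv s); rewrite ?wprod_inv //; apply: reduced_inv.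
Qed.

Lemma wprod_reduced_neq1 u : reduced u -> u != [::] -> wprod u != 1.
Proof.
have [_ _ _ nf] := freeAB; case=> ok alt /eqP u0; apply/eqP.
by apply: nf u0 ok _; apply/alternatingE.
Qed.

Lemma mul_reduced_neq1 t x s : factor t x -> reduced s -> s != [::] ->
  head_side s != t -> x * wprod s != 1.
Proof.
move=> tx rs s0 hs; have [->|x1] := eqVneq x 1; first by rewrite mul1g wprod_reduced_neq1.
apply: (@wprod_reduced_neq1 ((t, x) :: s)) => //; apply/reduced_cons; split=> //.
  by split=> //; apply/eqP.
by rewrite /joinable /last_side /= [t == _]eq_sym hs !orbT.
Qed.

Lemma reduced_inA w : reduced w -> A (wprod w) -> w = [::] \/ exists a, w = [:: (true, a)].
Proof.
case: w => [|[t x] w] rw Aw; first by left.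
have [_ mulA invA] := subA; have /reduced_cons[[tx _] rw' jw] := rw.
case: t tx jw rw Aw => /= tx jw rw Aw; last first.
  by have /eqP[] := @mul_reduced_neq1 true _ _ (invA _ Aw) rw isT isT; rewrite mulVg.
have [->|w0] := eqVneq w [::]; [by right; exists x | exfalso].
have hw : head_side w != true.
  by move: jw; rewrite /joinable (negPf w0) /last_side /= eq_sym.
have /eqP[] := @mul_reduced_neq1 true _ _ (mulA _ _ (invA _ Aw) tx) rw' w0 hw.
by rewrite -mulgA mulVg.
Qed.

Lemma starts_with_B_notA w : starts_with_B A B w -> ~ A (wprod w).
Proof. by case=> rw hw /(reduced_inA rw)[|[a]] e; rewrite e in hw. Qed.

Lemma join_notA u c v : reduced u -> starts_with_B A B v -> A c -> c != 1 ->
  last_side u = false -> ~ A (wprod u * c * wprod v).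
Proof.
move=> ru [rv hv] Ac c1 lu; have := reduced_join ru rv Ac c1 lu hv.
have -> : wprod u * c * wprod v = wprod (u ++ (true, c) :: v) by rewrite wprod_cat -mulgA.
move=> r /(reduced_inA r)[|[a]]; first by case: (u).
by move/(congr1 size); rewrite size_cat /= addnS; case: (u) (v) hv => [|? ?] [].
Qed.

End FreeProduct.

Section LexicographicInduction.
Variables (T : Type) (f g h : T -> nat).

Definition lexlt3 (x y : T) :=
  f x < f y \/ f x = f y /\ (g x < g y \/ g x = g y /\ h x < h y).

Lemma lexlt3_ind (P : T -> Prop) :
  (forall y, (forall x, lexlt3 x y -> P x) -> P y) -> forall y, P y.
Proof.
move=> IH; suff PP n m k y : f y = n -> g y = m -> h y = k -> P y by move=> y; apply: PP.
elim/ltn_ind: n m k y => n IHn; elim/ltn_ind => m IHm; elim/ltn_ind => k IHk y fy gy hy.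
apply: IH => x [lt|[e [lt|[e' lt]]]].
- by apply: (IHn (f x)) => //; rewrite -fy.
- by apply: (IHm (g x)); rewrite // ?e // -gy.
- by apply: (IHk (h x)); rewrite // ?e ?e' // -hy.
Qed.

End LexicographicInduction.

Section Configurations.
Variables (G : groupType) (A B C' : G -> Prop).
Hypotheses (freeAB : is_free_product A B) (normC : normal_subsemigroup A C').
Hypothesis C'_1 : ~ C' 1.

Let subA : is_subgroup A. Proof. by case: freeAB. Qed.
Let subB : is_subgroup B. Proof. by case: freeAB. Qed.
Let C'_A x : C' x -> A x. Proof. by case: normC => sub _ _; apply: sub. Qed.
Let C'M x y : C' x -> C' y -> C' (x * y). Proof. by case: normC => _ mul _; apply: mul. Qed.
Let C'J x a : C' x -> A a -> C' (x ^ a). Proof. by case: normC => _ _ conj; apply: conj. Qed.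
Let C'_neq1 x : C' x -> x != 1. Proof. by move=> Cx; apply: contraPneq C'_1 => <-. Qed.

Local Notation word := (seq (bool * G)).
Local Notation reduced := (reduced A B).
Local Notation starts_with_B := (starts_with_B A B).
Local Notation B_bounded := (B_bounded A B).

Definition entry (e : G * word) := C' e.1 /\ starts_with_B e.2.
Definition config (L : seq (G * word)) := forall e, e \in L -> entry e.
Definition cval (L : seq (G * word)) := prodg [seq e.1 ^ wprod e.2 | e <- L].

Lemma config_cat P Q : config (P ++ Q) <-> config P /\ config Q.
Proof.
split=> [cPQ|[cP cQ] e]; last by rewrite mem_cat => /orP[]; [apply: cP | apply: cQ].
by split=> e eP; apply: cPQ; rewrite mem_cat eP ?orbT.
Qed.

Lemma config_cons e L : config (e :: L) <-> entry e /\ config L.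
Proof.
rewrite -cat1s config_cat; split=> [[c1 cL]|[e1 cL]]; split=> //.
  by apply: c1; rewrite inE.
by move=> e'; rewrite inE => /eqP->.
Qed.

Lemma cval_cons e L : cval (e :: L) = e.1 ^ wprod e.2 * cval L.
Proof. by []. Qed.

Lemma cval_cat P Q : cval (P ++ Q) = cval P * cval Q.
Proof. by elim: P => [|e P IH]; rewrite ?mul1g // cat_cons !cval_cons IH mulgA. Qed.

Lemma conj_entry d u : C' d -> reduced u -> ~ A (wprod u) ->
  exists e, [/\ entry e, d ^ wprod u = e.1 ^ wprod e.2 & size e.2 <= size u].
Proof.
move=> Cd ru nAu; have [a [w [Aa Bw -> le]]] := split_head_A subA ru nAu.
by exists (d ^ a, w); split; rewrite ?conjgM //; split=> //; apply: C'J.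
Qed.

Lemma config_conj L c : config L -> A c ->
  exists L', [/\ config L', size L' = size L & cval L' = c * cval L * c^-1].
Proof.
elim: L => [|[d w] L IH] cdL Ac; first by exists [::]; rewrite /cval /= mulg1 mulgV.
have /config_cons[[Cd Bw] cL] := cdL; have [L' [cL' sL' eL']] := IH cL Ac.
have [u ru eu] := reduced_repr freeAB (wprod w * c^-1).
have nAu : ~ A (wprod u).
  have [_ mulA _] := subA; rewrite eu => /(mulA _ _)/(_ Ac).
  by rewrite mulgVK; exact: (starts_with_B_notA freeAB Bw).
have [e [ee de _]] := conj_entry Cd ru nAu.
exists (e :: L'); split; rewrite ?config_cons //= ?sL' //.
by rewrite !cval_cons eL' -de eu /= conjgM conjgE invgK !mulgA mulgVK.
Qed.

Definition wsum (L : seq (G * word)) := sumn [seq size e.2 | e <- L].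

(* Earlier entries weigh more, so moving a longer word one place to the right
   decreases [wweight]. *)
Fixpoint wweight (L : seq (G * word)) :=
  if L is e :: L' then size L * size e.2 + wweight L' else 0.

Definition smaller := lexlt3 size wsum wweight.

Lemma smaller_cons e L' L : smaller L' L -> smaller (e :: L') (e :: L).
Proof. by rewrite /smaller /lexlt3 /wsum /=; lia. Qed.

Lemma smaller_swap e1 e2 e1' L : size e1'.2 <= size e1.2 -> size e2.2 < size e1.2 ->
  smaller (e2 :: e1' :: L) (e1 :: e2 :: L).
Proof. by rewrite /smaller /lexlt3 /wsum /=; nia. Qed.

Lemma smaller_shrink e1 e2 e2' L : size e2'.2 < size e2.2 ->
  smaller (e2' :: e1 :: L) (e1 :: e2 :: L).
Proof. by rewrite /smaller /lexlt3 /wsum /=; lia. Qed.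

Definition reducible L := exists L' c,
  [/\ config L', L' != [::], A c, cval L = cval L' * c & smaller L' L].

(* The conjugating word [w] of the first entry survives uncancelled on the left of
   [cval L]. *)
Definition exposed L :=
  if L is (d, w) :: _ then exists b v,
    [/\ A b, d * b != 1, starts_with_B v & wprod w * cval L = d * b * wprod v]
  else False.

Lemma exposed_notA L : config L -> exposed L -> ~ A (cval L).
Proof.
case: L => [|[d w] L] // /config_cons[[Cd [rw hw]] _] [b [v [Ab db1 Bv e]]].
have [_ mulA _] := subA.
have -> : cval ((d, w) :: L) = wprod (word_inv w) * (d * b) * wprod v.
  by rewrite wprod_inv -mulgA -e mulKg.
apply: (join_notA freeAB (reduced_inv subA subB rw) Bv (mulA _ _ (C'_A Cd) Ab) db1).
by rewrite last_side_inv.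
Qed.

Lemma exposed_join d w L b u c v : A b -> d * b != 1 -> B_bounded u -> A c -> c != 1 ->
  starts_with_B v -> wprod w * cval ((d, w) :: L) = d * b * (wprod u * c * wprod v) ->
  exposed ((d, w) :: L).
Proof.
move=> Ab db1 Bu Ac c1 Bv e; exists b, (u ++ (true, c) :: v); split=> //.
  exact: B_bounded_join.
by rewrite e wprod_cat wprod_cons !mulgA.
Qed.

Lemma exposed_single e : entry e -> exposed [:: e].
Proof.
case: e => d w [Cd Bw]; have [A1 _ _] := subA; exists 1, w; split; rewrite ?mulg1 //.
  exact: C'_neq1.
by rewrite /cval /= mulg1 conjgE mulVKg.
Qed.

Lemma reducible_cons e L : entry e -> reducible L -> reducible (e :: L).
Proof.
move=> ee [L' [c [cL' L'0 Ac eL lt]]]; exists (e :: L'), c; split=> //.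
- by apply/config_cons.
- by rewrite !cval_cons eL mulgA.
- exact: smaller_cons.
Qed.

Lemma reducible_pull P Q c L : config P -> config Q -> A c -> P ++ Q != [::] ->
  size P + size Q < size L -> cval L = cval P * c * cval Q -> reducible L.
Proof.
move=> cP cQ Ac PQ0 lt eL; have [Q' [cQ' sQ' eQ']] := config_conj cQ Ac.
exists (P ++ Q'), c; split=> //.
- by apply/config_cat.
- by rewrite -size_eq0 size_cat sQ' -size_cat size_eq0.
- by rewrite eL cval_cat eQ' !mulgA mulgVK.
- by left; rewrite size_cat sQ'.
Qed.

Section Step.
Variables (d1 d2 b : G) (w1 w2 v : word) (L1 : seq (G * word)).
Hypotheses (ent1 : entry (d1, w1)) (ent2 : entry (d2, w2)) (cL1 : config L1).
Hypotheses (Ab : A b) (d2b1 : d2 * b != 1) (Bv : starts_with_B v).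
Hypothesis exp2 : wprod w2 * cval ((d2, w2) :: L1) = d2 * b * wprod v.

Local Notation L := ((d1, w1) :: (d2, w2) :: L1).

Let d2A : A (d2 * b). Proof. by case: subA => _ mulA _; apply: mulA (C'_A ent2.1) Ab. Qed.

Lemma cval_exposed2 :
  wprod w1 * cval L = d1 * (wprod w1 * (wprod w2)^-1) * (d2 * b * wprod v).
Proof. by rewrite -exp2 cval_cons conjgE !mulgA mulgV mul1g mulgVK. Qed.

Lemma step_merge : w1 = w2 -> reducible L.
Proof.
move=> e12; subst w2; have [A1 _ _] := subA.
exists ((d1 * d2, w1) :: L1), 1; split=> //; last by left.
- by apply/config_cons; split=> //; split; [apply: C'M; [case: ent1 | case: ent2] | case: ent1].
- by rewrite mulg1 !cval_cons conjMg mulgA.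
Qed.

Lemma step_generic u : B_bounded u -> wprod u = wprod w1 * (wprod w2)^-1 -> exposed L.
Proof.
move=> Bu eu; have [A1 _ _] := subA.
apply: (exposed_join (b := 1) (c := d2 * b) _ _ Bu _ _ Bv) => //.
  by rewrite mulg1; apply: C'_neq1; case: ent1.
by rewrite cval_exposed2 -eu mulg1 !mulgA.
Qed.

Lemma step_left_cancel p a :
  w1 = p ++ (true, a) :: w2 -> B_bounded p -> a * d2 * b = 1 -> reducible L.
Proof.
(* [d1^w1 d2^w2 = d2^w2 d1^h], and [h = p b^-1 w2] is no longer than [w1]. *)
move=> ew [rp _ _] ad2b; have [A1 _ invA] := subA; have [Cd1 _] := ent1.
have [_ [rw2 _]] := ent2; set h := wprod w1 * d2 ^ wprod w2.
have eL : cval L = d2 ^ wprod w2 * d1 ^ h * cval L1.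
  by rewrite !cval_cons /= mulgA [d1 ^ _ * _]conjgC -conjgM.
have ad2 : a * d2 = b^-1 by rewrite -(mulg1_eq ad2b) invgK.
have [ub [rub eub sub]] := reduced_mull subA subB (t := true) (invA _ Ab) (reduced_nil A B).
have [u0 [ru0 eu0 su0]] := reduced_mul subA subB rp rub.
have [u [ru eu su]] := reduced_mul subA subB ru0 rw2.
have eh : wprod u = h.
  by rewrite eu eu0 eub /h ew wprod_cat wprod_cons conjgE mulg1 !mulgA mulgK -ad2 !mulgA.
have le : size u <= size w1 by move: su su0 sub; rewrite ew size_cat /=; lia.
case: (classic (A h)) => [Ah|nAh].
  apply: (reducible_pull (P := [:: (d2, w2)]) (c := d1 ^ h) _ cL1) => //.
  - by move=> e; rewrite inE => /eqP->.
  - exact/C'_A/C'J.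
  - by rewrite eL cval_cons mulg1.
rewrite -eh in nAh; have [e [ee de se]] := conj_entry Cd1 ru nAh.
exists ((d2, w2) :: e :: L1), 1; split=> //.
- by do 2![apply/config_cons; split=> //].
- by rewrite mulg1 eL -mulgA -eh de.
- apply: smaller_swap; first exact: leq_trans se le.
  by rewrite ew size_cat /= addnS ltnS leq_addl.
Qed.

Lemma step_right_cancel p a :
  w2 = p ++ (true, a) :: w1 -> B_bounded p -> d1 = a -> reducible L.
Proof.
(* [d1^w1 d2^w2 = d2^h d1^w1], and [h = p w1] is shorter than [w2]. *)
move=> ew [rp _ _] d1a; have [A1 _ _] := subA.
have [Cd2 _] := ent2; have [_ [rw1 _]] := ent1.
set h := wprod w2 * (d1 ^ wprod w1)^-1.
have eL : cval L = d2 ^ h * cval ((d1, w1) :: L1).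
  by rewrite !cval_cons /= mulgA [d1 ^ _ * d2 ^ _]conjgCV -conjgM -mulgA.
have [u [ru eu su]] := reduced_mul subA subB rp rw1.
have eh : wprod u = h.
  by rewrite eu /h ew wprod_cat wprod_cons -conjVg conjgE d1a /= !mulgA !mulgK.
have lt : size u < size w2 by move: su; rewrite ew size_cat /=; lia.
case: (classic (A h)) => [Ah|nAh].
  apply: (reducible_pull (P := [::]) (Q := (d1, w1) :: L1) (c := d2 ^ h)) => //.
  - by apply/config_cons.
  - exact/C'_A/C'J.
  - by rewrite eL mul1g.
rewrite -eh in nAh; have [e [ee de se]] := conj_entry Cd2 ru nAh.
exists (e :: (d1, w1) :: L1), 1; split=> //.
- by do 2![apply/config_cons; split=> //].
- by rewrite mulg1 eL -eh de.
- exact/smaller_shrink/(leq_ltn_trans se).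
Qed.

Lemma step_left p a : w1 = p ++ (true, a) :: w2 -> A a -> a != 1 -> B_bounded p ->
  reducible L \/ exposed L.
Proof.
move=> ew Aa a1 Bp; have [A1 mulA _] := subA.
have [ad2b|ad2b] := eqVneq (a * d2 * b) 1; first by left; apply: step_left_cancel ew Bp ad2b.
right; apply: (exposed_join (b := 1) _ _ Bp _ ad2b Bv) => //.
- by rewrite mulg1; apply: C'_neq1; case: ent1.
- by rewrite -mulgA; apply: mulA.
- by rewrite cval_exposed2 ew wprod_cat wprod_cons /= !mulgA mulgK mulg1.
Qed.

Lemma step_right p a : w2 = p ++ (true, a) :: w1 -> A a -> a != 1 -> B_bounded p ->
  reducible L \/ exposed L.
Proof.
move=> ew Aa a1 Bp; have [_ _ invA] := subA.
have [/divg1_eq d1a|d1a] := eqVneq (d1 / a) 1.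
  by left; apply: step_right_cancel ew Bp d1a.
right; apply: (exposed_join _ d1a (B_bounded_inv subA subB Bp) d2A d2b1 Bv).
  exact: invA.
by rewrite cval_exposed2 ew wprod_cat wprod_cons wprod_inv /= !invgM !mulgA mulgK.
Qed.

Lemma step : reducible L \/ exposed L.
Proof.
have [[_ Bw1] [_ Bw2]] := (ent1, ent2).
case: (compare_B_words subA subB Bw1 Bw2)
  => [e12|[p [a [ew Aa a1 Bp]]]|[p [a [ew Aa a1 Bp]]]|[u Bu eu]].
- by left; apply: step_merge.
- exact: step_left ew Aa a1 Bp.
- exact: step_right ew Aa a1 Bp.
- by right; apply: step_generic Bu eu.
Qed.

End Step.

Lemma reducible_or_exposed L : config L -> L != [::] -> reducible L \/ exposed L.
Proof.
elim: L => [//|e L IH] cL _; have /config_cons[ee cL'] := cL.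
case: L IH cL cL' => [|[d2 w2] L1] IH cL cL'; first by right; apply: exposed_single.
case: (IH cL' isT) => [red|[b [v [Ab d2b Bv ex]]]]; first by left; apply: reducible_cons.
case: e ee {cL} => d1 w1 ee; have /config_cons[e2 cL1] := cL'.
exact: step ee e2 cL1 Ab d2b Bv ex.
Qed.

Lemma config_notA L : config L -> L != [::] -> ~ A (cval L).
Proof.
elim/(@lexlt3_ind _ size wsum wweight): L => L IH cL L0.
have [[L' [c [cL' L'0 Ac eL lt]]]|] := reducible_or_exposed cL L0; last exact: exposed_notA.
rewrite eL => AL'c; apply: IH lt cL' L'0 _; have [_ mulA invA] := subA.
by have := mulA _ _ AL'c (invA _ Ac); rewrite mulgK.
Qed.

Lemma config_of_conjugates s : (forall p, p \in s -> C' p.1 /\ ~ A p.2) ->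
  exists L, [/\ config L, size L = size s & cval L = prodg [seq p.1 ^ p.2 | p <- s]].
Proof.
elim: s => [|[c h] s IH] hs; first by exists [::].
have [Cc nAh] := hs _ (mem_head _ _).
have [|L [cL sL eL]] := IH; first by move=> p ps; apply: hs; rewrite inE ps orbT.
have [u ru eu] := reduced_repr freeAB h; rewrite -eu in nAh.
have [e [ee de _]] := conj_entry Cc ru nAh.
exists (e :: L); split; rewrite /= ?sL //; first by apply/config_cons.
by rewrite cval_cons eL -de eu.
Qed.

End Configurations.

Theorem mainTheorem17 (G : groupType) (A B : G -> Prop) :
  is_free_product A B -> multi_malnormal A.
Proof.
move=> freeAB C' normC C'_1 s s0 hs.
have [L [cL sL <-]] := config_of_conjugates freeAB normC hs.
apply: (config_notA freeAB normC C'_1 cL).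
by rewrite -size_eq0 sL size_eq0; apply/eqP.
Qed.
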